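(* For all types $\sigma,\tau$ (both in $\mathcal{T}_D$ or both in $\mathcal{T}_C$): if $\sigma\le\tau$ then $[\![\sigma]\!]\subseteq[\![\tau]\!]$.
   Context: $\lambda\mu$-calculus (Parigot). Terms $M,N ::= x \mid \lambda x.M \mid MN \mid \mu\alpha.[\beta]M$ over disjoint denumerable sets of term variables and names. Structural substitution $T[\alpha\Leftarrow L]$ replaces every subterm $[\alpha]N$ of $T$ by $[\alpha]N'L$ where $N'=N[\alpha\Leftarrow L]$ (recursively). Reduction is the compatible closure of $(\lambda x.M)N\to M[N/x]$ (capture-avoiding) and $(\mu\beta.[\gamma]M)N\to\mu\beta.(([\gamma]M)[\beta\Leftarrow N])$. $\mathcal{SN}$ is the set of terms with no infinite reduction sequence. A stack is a finite (possibly empty) sequence $\vec L=L_1:\cdots:L_k$ of terms, and $M\vec L$ denotes $ML_1\cdots L_k$; $\mathcal{SN}^*$ is the set of stacks of terms in $\mathcal{SN}$. Types: with constant $\nu$ and symbol $\omega$ (not itself a type), $\mathcal{T}_D:\ \delta ::= \nu \mid \omega\to\nu \mid \kappa\to\nu \mid \delta\wedge\delta$; $\mathcal{T}_C:\ \kappa ::= \delta\times\omega \mid \delta\times\kappa \mid \kappa\wedge\kappa$ ($\times$ right-associative). $\le$ is the least preorder on $\mathcal{T}_D$ and on $\mathcal{T}_C$ such that: $\sigma\wedge\tau\le\sigma$; $\sigma\wedge\tau\le\tau$; $\nu\le\omega\to\nu$; $\omega\to\nu\le\nu$; $\delta_1\times\delta_2\times\omega\le\delta_1\times\omega$; $(\delta_1\times\omega)\wedge(\delta_2\times\kappa)\le(\delta_1\wedge\delta_2)\times\kappa$;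 $(\delta_1\times\kappa_1)\wedge(\delta_2\times\kappa_2)\le(\delta_1\wedge\delta_2)\times(\kappa_1\wedge\kappa_2)$; $\delta_1\le\delta_2\Rightarrow\delta_1\times\omega\le\delta_2\times\omega$; $\delta_1\le\delta_2,\kappa_1\le\kappa_2\Rightarrow\delta_1\times\kappa_1\le\delta_2\times\kappa_2$; $\sigma\le\tau_1,\sigma\le\tau_2\Rightarrow\sigma\le\tau_1\wedge\tau_2$; $\kappa_2\le\kappa_1\Rightarrow\kappa_1\to\nu\le\kappa_2\to\nu$. Interpretation: $[\![\nu]\!]=[\![\omega\to\nu]\!]=\mathcal{SN}$; $[\![\kappa\to\nu]\!]=\{M\mid \forall\vec L\in[\![\kappa]\!].\ M\vec L\in\mathcal{SN}\}$; $[\![\delta\times\omega]\!]=\{N:\vec L\mid N\in[\![\delta]\!],\vec L\in\mathcal{SN}^*\}$; $[\![\delta\times\kappa]\!]=\{N:\vec L\mid N\in[\![\delta]\!],\vec L\in[\![\kappa]\!]\}$; $[\![\sigma\wedge\tau]\!]=[\![\sigma]\!]\cap[\![\tau]\!]$. *)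

(* lambda-mu calculus with de Bruijn indices for both
   term variables and names. *)
From Stdlib Require Import Arith List.
Import ListNotations.

(* Mu b M  represents  mu alpha.[beta]M : the Mu binds name index 0 (alpha),
   b is the de Bruijn index of the name beta (under that binder). *)
Inductive term : Type :=
| Var : nat -> term
| Lam : term -> term
| App : term -> term -> term
| Mu  : nat -> term -> term.

Fixpoint lift_t (c : nat) (t : term) : term :=
  match t with
  | Var n => if c <=? n then Var (S n) else Var n
  | Lam M => Lam (lift_t (S c) M)
  | App M N => App (lift_t c M) (lift_t c N)
  | Mu b M => Mu b (lift_t c M)
  end.

Fixpoint lift_n (c : nat) (t : term) : term :=
  match t with
  | Var n => Var n
  | Lam M => Lam (lift_n c M)
  | App M N => App (lift_n c M) (lift_n c N)
  | Mu b M => Mu (if S c <=? b then S b else b) (lift_n (S c) M)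
  end.

Fixpoint subst_t (k : nat) (N : term) (t : term) : term :=
  match t with
  | Var n => if n =? k then N else if k <? n then Var (pred n) else Var n
  | Lam M => Lam (subst_t (S k) (lift_t 0 N) M)
  | App M1 M2 => App (subst_t k N M1) (subst_t k N M2)
  | Mu b M => Mu b (subst_t k (lift_n 0 N) M)
  end.

(* structural substitution T[alpha <= L], alpha = name index k:
   every [alpha]N becomes [alpha](N' L), N' = N[alpha <= L]. *)
Fixpoint ssubst (k : nat) (L : term) (t : term) : term :=
  match t with
  | Var n => Var n
  | Lam M => Lam (ssubst k (lift_t 0 L) M)
  | App M1 M2 => App (ssubst k L M1) (ssubst k L M2)
  | Mu b M =>
      let L' := lift_n 0 L in
      let M' := ssubst (S k) L' M in
      Mu b (if b =? S k then App M' L' else M')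
  end.

Inductive step : term -> term -> Prop :=
| step_beta : forall M N, step (App (Lam M) N) (subst_t 0 N M)
| step_mu : forall b M N,
    (* (mu beta.[gamma]M) N -> mu beta.(([gamma]M)[beta <= N]) *)
    let N' := lift_n 0 N in
    let M' := ssubst 0 N' M in
    step (App (Mu b M) N) (Mu b (if b =? 0 then App M' N' else M'))
| step_lam : forall M M', step M M' -> step (Lam M) (Lam M')
| step_appl : forall M M' N, step M M' -> step (App M N) (App M' N)
| step_appr : forall M N N', step N N' -> step (App M N) (App M N')
| step_mub : forall b M M', step M M' -> step (Mu b M) (Mu b M').

Definition SN (t : term) : Prop := Acc (fun u v => step v u) t.

Definition app_stack (M : term) (Ls : list term) : term := fold_left App Ls M.

Definition SNstar (Ls : list term) : Prop := Forall SN Ls.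

Inductive tyD : Type :=
| Nu : tyD
| OmArr : tyD                     (* omega -> nu *)
| KArr : tyC -> tyD               (* kappa -> nu *)
| DMeet : tyD -> tyD -> tyD
with tyC : Type :=
| XOm : tyD -> tyC                (* delta x omega *)
| XK : tyD -> tyC -> tyC
| CMeet : tyC -> tyC -> tyC.

Inductive leD : tyD -> tyD -> Prop :=
| leD_refl : forall d, leD d d
| leD_trans : forall d1 d2 d3, leD d1 d2 -> leD d2 d3 -> leD d1 d3
| leD_meetl : forall d1 d2, leD (DMeet d1 d2) d1
| leD_meetr : forall d1 d2, leD (DMeet d1 d2) d2
| leD_nu_om : leD Nu OmArr
| leD_om_nu : leD OmArr Nu
| leD_glb : forall d d1 d2, leD d d1 -> leD d d2 -> leD d (DMeet d1 d2)
| leD_arr : forall k1 k2, leC k2 k1 -> leD (KArr k1) (KArr k2)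
with leC : tyC -> tyC -> Prop :=
| leC_refl : forall k, leC k k
| leC_trans : forall k1 k2 k3, leC k1 k2 -> leC k2 k3 -> leC k1 k3
| leC_meetl : forall k1 k2, leC (CMeet k1 k2) k1
| leC_meetr : forall k1 k2, leC (CMeet k1 k2) k2
| leC_drop : forall d1 d2, leC (XK d1 (XOm d2)) (XOm d1)
| leC_meet_om : forall d1 d2 k,
    leC (CMeet (XOm d1) (XK d2 k)) (XK (DMeet d1 d2) k)
| leC_meet_k : forall d1 d2 k1 k2,
    leC (CMeet (XK d1 k1) (XK d2 k2)) (XK (DMeet d1 d2) (CMeet k1 k2))
| leC_mon_om : forall d1 d2, leD d1 d2 -> leC (XOm d1) (XOm d2)
| leC_mon_k : forall d1 d2 k1 k2, leD d1 d2 -> leC k1 k2 -> leC (XK d1 k1) (XK d2 k2)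
| leC_glb : forall k k1 k2, leC k k1 -> leC k k2 -> leC k (CMeet k1 k2).

Fixpoint intD (d : tyD) (M : term) {struct d} : Prop :=
  match d with
  | Nu => SN M
  | OmArr => SN M
  | KArr k => forall Ls, intC k Ls -> SN (app_stack M Ls)
  | DMeet d1 d2 => intD d1 M /\ intD d2 M
  end
with intC (k : tyC) (Ls : list term) {struct k} : Prop :=
  match k with
  | XOm d => match Ls with nil => False | N :: Ls' => intD d N /\ SNstar Ls' end
  | XK d k' => match Ls with nil => False | N :: Ls' => intD d N /\ intC k' Ls' end
  | CMeet k1 k2 => intC k1 Ls /\ intC k2 Ls
  end.

(* Every
   rule is immediate from the clauses of the interpretation, except dropping
   the tail of [d1 x d2 x omega], which needs every [[d2]] to consist of
   strongly normalising terms. That fact is proved in the style of Girard's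
   reducibility candidates, simultaneously with: the variable inhabits every
   [[delta]], and every [[kappa]] contains all long enough stacks of
   variables (which is what makes the stacks in [[kappa -> nu]] nonempty). *)
From Stdlib Require Import Arith List Lia.
Import ListNotations.

Lemma SN_app_l : forall t, SN t -> forall M N, t = App M N -> SN M.
Proof.
  intros t H; induction H as [t _ IH]; intros M N ->.
  constructor; intros M' Hs.
  eapply IH; [apply step_appl; exact Hs | reflexivity].
Qed.

Lemma SN_app_stack_l : forall Ls M, SN (app_stack M Ls) -> SN M.
Proof.
  induction Ls as [|L Ls IH]; intros M H; simpl in *; auto.
  apply IH in H. eapply SN_app_l; eauto.
Qed.

Lemma SN_Var : forall x, SN (Var x).
Proof. intros x; constructor; intros y Hs; inversion Hs. Qed.

(* Terms [x N1 ... Nk]: they never create a redex when applied. *)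
Inductive neutral : term -> Prop :=
| neutral_Var : forall x, neutral (Var x)
| neutral_App : forall A N, neutral A -> neutral (App A N).

Lemma neutral_step : forall A A', step A A' -> neutral A -> neutral A'.
Proof.
  intros A A' Hs; induction Hs; intros H; inversion H; subst;
    try match goal with h : neutral (Lam _) |- _ => inversion h end;
    try match goal with h : neutral (Mu _ _) |- _ => inversion h end;
    constructor; auto.
Qed.

Lemma SN_app_neutral :
  forall A, SN A -> neutral A -> forall N, SN N -> SN (App A N).
Proof.
  intros A HA; induction HA as [A _ IHA]; intros HnA N HN.
  induction HN as [N HNacc IHN].
  constructor; intros t Hs; inversion Hs; subst.
  - inversion HnA.
  - inversion HnA.
  - apply IHA; auto. eapply neutral_step; eauto. constructor; auto.
  - apply IHN; auto.
Qed.

Lemma SN_app_stack_neutral :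
  forall Ls, SNstar Ls -> forall A, neutral A -> SN A -> SN (app_stack A Ls).
Proof.
  intros Ls H; induction H as [|L Ls HL _ IH]; intros A HnA HA; simpl; auto.
  apply IH; [constructor; auto | apply SN_app_neutral; auto].
Qed.

Lemma SNstar_repeat_Var : forall x m, SNstar (repeat (Var x) m).
Proof. intros x; induction m; simpl; constructor; auto using SN_Var. Qed.

Scheme tyD_mut := Induction for tyD Sort Prop
with tyC_mut := Induction for tyC Sort Prop.
Combined Scheme ty_mutind from tyD_mut, tyC_mut.

Lemma interp_candidates :
  (forall d, (forall M, intD d M -> SN M) /\ intD d (Var 0)) /\
  (forall k, (forall Ls, intC k Ls -> SNstar Ls) /\
             exists n, forall m, n <= m -> intC k (repeat (Var 0) m)).
Proof.
  apply ty_mutind; simpl.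
  - split; auto using SN_Var.
  - split; auto using SN_Var.
  - intros k [HSN [n Hvars]]; split.
    + intros M HM. apply (SN_app_stack_l (repeat (Var 0) n)), HM, Hvars; lia.
    + intros Ls HLs. apply SN_app_stack_neutral; auto using SN_Var.
      constructor.
  - intros d1 [HSN1 Hvar1] d2 [_ Hvar2]; split; [intros M [HM _]|]; auto.
  - intros d [HSN Hvar]; split.
    + intros [|N Ls] H; [contradiction|]; destruct H as [HN HLs].
      constructor; [auto | exact HLs].
    + exists 1; intros [|m] Hm; [lia|]; simpl; split; auto.
      apply SNstar_repeat_Var.
  - intros d [HSN Hvar] k [HSNk [n Hvars]]; split.
    + intros [|N Ls] H; [contradiction|]; destruct H as [HN HLs].
      constructor; [auto | exact (HSNk _ HLs)].
    + exists (S n); intros [|m] Hm; [lia|]; simpl; split; auto.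
      apply Hvars; lia.
  - intros k1 [HSN1 [n1 Hvars1]] k2 [_ [n2 Hvars2]]; split.
    + intros Ls [HLs _]; auto.
    + exists (max n1 n2); intros m Hm.
      split; [apply Hvars1 | apply Hvars2]; lia.
Qed.

Lemma intC_SNstar : forall k Ls, intC k Ls -> SNstar Ls.
Proof. intros k; apply (proj2 interp_candidates k). Qed.

Scheme leD_mut := Minimality for leD Sort Prop
with leC_mut := Minimality for leC Sort Prop.
Combined Scheme le_mutind from leD_mut, leC_mut.

Theorem mainTheorem10 :
  (forall s t : tyD, leD s t -> forall M : term, intD s M -> intD t M) /\
  (forall s t : tyC, leC s t -> forall Ls : list term, intC s Ls -> intC t Ls).
Proof.
  apply (le_mutind (fun s t => forall M, intD s M -> intD t M)
                   (fun s t => forall Ls, intC s Ls -> intC t Ls));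
    simpl; try tauto.
  - intros d1 d2 d3 _ H12 _ H23 M HM; auto.
  - intros d d1 d2 _ H1 _ H2 M HM; auto.
  - intros k1 k2 _ H21 M HM Ls HLs; auto.
  - intros k1 k2 k3 _ H12 _ H23 Ls HLs; auto.
  - intros d1 d2 [|N Ls] H; [contradiction|]. destruct H as [HN Htail].
    split; [exact HN | exact (intC_SNstar (XOm d2) Ls Htail)].
  - intros d1 d2 k [|N Ls]; simpl; tauto.
  - intros d1 d2 k1 k2 [|N Ls]; simpl; tauto.
  - intros d1 d2 _ H12 [|N Ls] H; [contradiction|]. destruct H; auto.
  - intros d1 d2 k1 k2 _ Hd _ Hk [|N Ls] H; [contradiction|]. destruct H; auto.
  - intros k k1 k2 _ H1 _ H2 Ls HLs; auto.
Qed.
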